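(* Let $X$ be a doubling discrete metric space, $Y$ a set, and let $A=(a_{y,x})$ be a thin-$\emptyset$ operator of thickness $r$ such that $\||A|\|_{p\to p}\leq1$ for some $1\leq p<\infty$. Then there exists $C$, depending only on the doubling constant of $X$, such that for every non-zero $f\in\ell^p(X)$ and every $L\geq r$, there exists a non-zero function $h\in\ell^p(X)$ supported in a ball of radius $2L$ such that $$\frac{\|Ah\|_p}{\|h\|_p}\leq C\left(\frac{\|Af\|_p}{\|f\|_p}+\frac{r}{L}\right).$$
   Context: $X$ is doubling with doubling constant $D$ if $V(x,2r)\leq D\,V(x,r)$ for all $x\in X$, $r>0$, where $V(x,r)$ is the cardinality of the closed ball of radius $r$. $A$ acts by $Af(y)=\sum_x a_{y,x}f(x)$ and is thin-$\emptyset$ of thickness $r$ if every row $(a_{y,x})_{x\in X}$ is supported in a ball of radius $r$. $|A|=(|a_{y,x}|)$. *)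

From mathcomp Require Import all_boot all_order all_algebra.
From mathcomp Require Import finmap complex.
From mathcomp Require Import all_classical all_reals all_analysis.
Set Implicit Arguments. Unset Strict Implicit. Unset Printing Implicit Defensive.
Import Order.TTheory GRing.Theory Num.Theory.
Local Open Scope ring_scope.
Local Open Scope classical_set_scope.

Section Defs.
Variable R : realType.

Definition cabs (z : R[i]) : R := ComplexField.Normc.normc z.

Definition is_metric (X : Type) (d : X -> X -> R) : Prop :=
  (forall x y, 0 <= d x y) /\
  (forall x y, d x y = 0 <-> x = y) /\
  (forall x y, d x y = d y x) /\
  (forall x y z, d x z <= d x y + d y z).

Definition cball (X : Type) (d : X -> X -> R) (x : X) (r : R) : set X :=
  [set y | d x y <= r].

(* discrete metric space: every closed ball is finite *)
Definition locally_finite (X : Type) (d : X -> X -> R) : Prop :=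
  forall x r, finite_set (cball d x r).

Definition V (X : choiceType) (d : X -> X -> R) (x : X) (r : R) : nat :=
  (#|` fset_set (cball d x r) |)%N.

Definition doubling (X : choiceType) (d : X -> X -> R) (D : R) : Prop :=
  forall x r, 0 < r -> ((V d x (2 * r))%:R <= D * (V d x r)%:R).

Definition supported_in_ball (X : Type) (d : X -> X -> R) (K : Type) (zero : K)
  (g : X -> K) (r : R) : Prop :=
  exists x0, forall x, g x <> zero -> d x0 x <= r.

(* A = (a y x) is thin-emptyset of thickness r: every row is supported in a
   ball of radius r *)
Definition thin (X Y : Type) (d : X -> X -> R) (a : Y -> X -> R[i]) (r : R) : Prop :=
  forall y, supported_in_ball d 0 (a y) r.

(* (A f)(y) = sum_x a_{y,x} f(x)  (finitely supported sum for thin A) *)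
Definition apply_op (X : choiceType) (Y : Type) (a : Y -> X -> R[i])
  (f : X -> R[i]) : Y -> R[i] :=
  fun y => \sum_(x \in [set: X]) a y x * f x.

Definition abs_op (X Y : Type) (a : Y -> X -> R[i]) : Y -> X -> R[i] :=
  fun y x => ((cabs (a y x))%:C)%C.

Definition lp_pow (T : choiceType) (p : R) (f : T -> R[i]) : \bar R :=
  (\esum_(x in [set: T]) ((cabs (f x)) `^ p)%:E)%E.

Definition in_lp (T : choiceType) (p : R) (f : T -> R[i]) : Prop :=
  (lp_pow p f < +oo)%E.

(* ||f||_p (meaningful when f is in l^p) *)
Definition lp_norm (T : choiceType) (p : R) (f : T -> R[i]) : R :=
  (fine (lp_pow p f)) `^ (p^-1).

Definition op_norm_le1 (X Y : choiceType) (p : R) (b : Y -> X -> R[i]) : Prop :=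
  forall f : X -> R[i], in_lp p f ->
    in_lp p (apply_op b f) /\ lp_norm p (apply_op b f) <= lp_norm p f.

End Defs.

(* Average over all cutoffs of f.  For z : X let psi_z x = max(0, 1 - d(z,x)/L),
   which is 1/L-Lipschitz and vanishes outside B(z, L), and give z the weight
   w_z = 1/V(z, L).  Every row of A lives in a ball B(c_y, r) with r <= L, so
     |A(psi_z f)(y)| <= psi_z(c_y) |Af(y)| + (r/L) (|A||f|)(y),
   and A(psi_z f)(y) = 0 unless d(z, c_y) <= 2L.  By doubling, the total weight
   of a ball of radius 2L is at most D^2 and that of a ball of radius L/2 is at
   least 1/D^2.  Together with || |A||f| ||_p <= ||f||_p this gives
     sum_z w_z ||A(psi_z f)||_p^p <= D^2 2^p (||Af||_p^p + (r/L)^p ||f||_p^p),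
     sum_z w_z ||psi_z f||_p^p   >= 2^-p D^-2 ||f||_p^p,
   so some z has ||A(psi_z f)||_p / ||psi_z f||_p <= 16 D^4 (||Af||_p/||f||_p + r/L). *)

From mathcomp Require Import all_boot all_order all_algebra.
From mathcomp Require Import finmap complex.
From mathcomp Require Import ring lra.
From mathcomp Require Import all_classical all_reals all_analysis.
Import Order.TTheory GRing.Theory Num.Theory.
Set Implicit Arguments.
Unset Strict Implicit.
Unset Printing Implicit Defensive.

Local Open Scope ring_scope.

Section Modulus.
Variable R : realType.
Implicit Types (z w : R[i]) (x : R).

Lemma cabsE z : ((cabs z)%:C)%C = `|z|.
Proof. by []. Qed.

Lemma cabs_ge0 z : 0 <= cabs z.
Proof. by case: z => x y; rewrite /cabs /= sqrtr_ge0. Qed.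

Lemma cabsM z w : cabs (z * w) = cabs z * cabs w.
Proof. exact: ComplexField.Normc.normcM. Qed.

Lemma ler_cabsD z w : cabs (z + w) <= cabs z + cabs w.
Proof. by rewrite -lecR rmorphD /= !cabsE ler_normD. Qed.

Lemma ler_cabs_sum (I : Type) (s : seq I) (F : I -> R[i]) :
  cabs (\sum_(i <- s) F i) <= \sum_(i <- s) cabs (F i).
Proof.
rewrite -lecR cabsE rmorph_sum /=.
under [X in _ <= X]eq_bigr do rewrite cabsE.
exact: ler_norm_sum.
Qed.

Lemma cabs_real x : cabs (x%:C)%C = `|x|.
Proof. by rewrite /cabs /= [0 ^+ 2]expr2 mulr0 addr0 sqrtr_sqr. Qed.

Lemma cabs0 : cabs (0 : R[i]) = 0.
Proof. by rewrite -[0 : R[i]]/((0:R)%:C)%C cabs_real normr0. Qed.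

Lemma cabs_eq0 z : cabs z = 0 -> z = 0.
Proof. exact: ComplexField.Normc.eq0_normc. Qed.

End Modulus.

Section RealPowers.
Variable R : realType.
Implicit Types (u v x y : R).

Lemma ler_dist_max0 u v : `|Num.max 0 u - Num.max 0 v| <= `|u - v|.
Proof.
case: (lerP 0 u) => hu; case: (lerP 0 v) => hv; rewrite ?subrr ?normr0 ?normr_ge0 //.
- by rewrite subr0 ger0_norm //; apply: le_trans (ler_norm _); lra.
- by rewrite sub0r normrN ger0_norm // distrC; apply: le_trans (ler_norm _); lra.
Qed.

Lemma powRV p y : 0 <= y -> y^-1 `^ p = (y `^ p)^-1.
Proof. by move=> y0; rewrite -powR_inv1 // powRAC powR_inv1 ?powR_ge0. Qed.

Variable p : R.
Hypothesis p_ge0 : 0 <= p.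

Lemma ler_powRr x y : 0 <= x -> x <= y -> x `^ p <= y `^ p.
Proof.
move=> x0 xy; apply: (ge0_ler_powR p_ge0) => //; rewrite nnegrE //.
exact: le_trans xy.
Qed.

Lemma powRD_le u v : 0 <= u -> 0 <= v -> (u + v) `^ p <= 2 `^ p * (u `^ p + v `^ p).
Proof.
move=> u0 v0; wlog uv : u v u0 v0 / u <= v.
  move=> hwlog; have [/hwlog|/ltW/hwlog] := leP u v; first exact.
  by rewrite addrC [u `^ p + _]addrC; apply.
apply: (@le_trans _ _ ((2 * v) `^ p)); first by apply: ler_powRr; rewrite ?addr_ge0 //; lra.
by rewrite powRM // ler_wpM2l ?powR_ge0 // lerDr powR_ge0.
Qed.

End RealPowers.

Lemma localization_constant (R : realType) (D p rho s N : R) :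
  1 <= D -> 1 <= p -> 0 <= rho -> 0 <= s -> 0 <= N ->
  2 * (D ^+ 2 * 2 `^ p * (rho `^ p * N + s `^ p * N)) <=
  (16 * D ^+ 4 * (rho + s)) `^ p * ((2 `^ p)^-1 / D ^+ 2 * N).
Proof.
move=> D_ge1 p_ge1 rho_ge0 s_ge0 N_ge0.
rewrite (_ : 2 * _ = 2 * (D ^+ 2 * 2 `^ p * (rho `^ p + s `^ p)) * N); last by ring.
rewrite [X in _ <= X]mulrA ler_wpM2r //.
have p_ge0 : 0 <= p by exact: le_trans p_ge1.
have D_gt0 : 0 < D := lt_le_trans ltr01 D_ge1.
have D_ge0 : 0 <= D := ltW D_gt0.
have D4_ge1 : 1 <= D ^+ 4 by rewrite exprn_ege1.
have two_p_gt0 : 0 < 2 `^ p by rewrite powR_gt0.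
set q := (rho + s) `^ p.
have q_ge0 : 0 <= q := powR_ge0 _ _.
have sum_le : rho `^ p + s `^ p <= 2 * q.
  by rewrite mulr_natl mulr2n lerD // ler_powRr ?lerDl ?lerDr ?addr_ge0.
have const_le : 4 * D ^+ 4 * (2 `^ p * 2 `^ p) <= (16 * D ^+ 4) `^ p.
  have D4_ge0 : 0 <= D ^+ 4 := le_trans ler01 D4_ge1.
  have -> : (16 : R) = 4 * 4 by rewrite -natrM.
  rewrite (powRM p _ D4_ge0) ?mulr_ge0 // (powRM p (ler0n _ 4) (ler0n _ 4)).
  rewrite -(powRM p (ler0n _ 2) (ler0n _ 2)) -natrM.
  rewrite (_ : 4 * D ^+ 4 * 4 `^ p = (4 `^ p * 4) * D ^+ 4); last by ring.
  apply: ler_pM; rewrite ?mulr_ge0 ?powR_ge0 //.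
    by rewrite ler_wpM2l ?powR_ge0 // le1r_powR // ler1n.
  exact: le1r_powR.
rewrite powRM ?mulr_ge0 ?addr_ge0 ?(le_trans ler01 D4_ge1) // -/q.
apply: (@le_trans _ _ (4 * D ^+ 4 * (2 `^ p * 2 `^ p) * q * ((2 `^ p)^-1 / D ^+ 2))).
  rewrite (_ : _ * q * _ = 2 * (D ^+ 2 * 2 `^ p * (2 * q))); last first.
    by field; rewrite !gt_eqF.
  by rewrite ler_pM2l // ler_wpM2l // mulr_ge0 ?sqr_ge0 ?powR_ge0.
by rewrite ler_wpM2r ?divr_ge0 ?invr_ge0 ?powR_ge0 ?sqr_ge0 // ler_wpM2r.
Qed.

Section ExtendedSums.
Variable R : realType.
Local Open Scope ereal_scope.
Local Open Scope classical_set_scope.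

Lemma ge0_esumZl (T : choiceType) (I : set T) (k : R) (a : T -> \bar R) :
  (0 <= k)%R -> (forall i, 0 <= a i) ->
  \esum_(i in I) (k%:E * a i) = k%:E * \esum_(i in I) a i.
Proof.
move=> k0 a0; rewrite /esum -ereal_supZl //; last first.
  apply/set0P; exists (\sum_(x \in set0) a x); exists set0 => //.
  exact: fsets_set0.
congr ereal_sup; apply/seteqP; split => x /=.
  move=> [A hA <-]; exists (\sum_(x \in A) a x); first by exists A.
  by rewrite ge0_mule_fsumr.
by move=> [_ [A hA <-] <-]; exists A => //; rewrite ge0_mule_fsumr.
Qed.

Lemma exchange_esum (T1 T2 : choiceType) (a : T1 -> T2 -> \bar R) :
  (forall i j, 0 <= a i j) ->
  \esum_(i in [set: T1]) \esum_(j in [set: T2]) a i j =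
  \esum_(j in [set: T2]) \esum_(i in [set: T1]) a i j.
Proof.
move=> a0; rewrite !esum_esum //.
rewrite (reindex_esum ([set: T2] `*`` (fun=> [set: T1])) _ (fun x => (x.2, x.1))) //.
split=> //=.
- by move=> [i1 i2] [j1 j2] /= _ _ [] -> ->.
- by move=> [i1 i2] _ /=; exists (i2, i1).
Qed.

Lemma esum_finite_support (T : choiceType) (B : set T) (a : T -> \bar R) :
  finite_set B -> (forall i, 0 <= a i) -> (forall i, ~ B i -> a i = 0) ->
  \esum_(i in [set: T]) a i = \sum_(i <- fset_set B) a i.
Proof.
move=> fB a0 aB; rewrite (esumID B) //.
rewrite (@esum1 _ _ (setT `&` ~` B)) ?adde0; last by move=> i [_ /aB].
by rewrite setTI esum_fset // ?fsbig_finite.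
Qed.

Lemma le_term_esum (T : choiceType) (a : T -> \bar R) t :
  (forall i, 0 <= a i) -> a t <= \esum_(i in [set: T]) a i.
Proof.
move=> a0; apply: esum_ge; exists [set t]; last by rewrite fsbig_set1.
by split => //; exact: finite_set1.
Qed.

Lemma esum_lt_exists (T : choiceType) (I : set T) (a b : T -> \bar R) :
  \esum_(i in I) a i < \esum_(i in I) b i -> exists2 i, I i & a i < b i.
Proof.
move=> lt_ab; apply: contrapT => no_i.
move: lt_ab; rewrite ltNge => /negP; apply; apply: le_esum => i Ii.
by rewrite leNgt; apply/negP => ab; apply: no_i; exists i.
Qed.

(* The factor 2 provides the room for a strict inequality when [M > 0]; when
   [M <= 0] every [a z] vanishes and [t] itself works. *)
Lemma weighted_pigeonhole (T : choiceType) (w a b : T -> R) (K M N : R) (t : T) :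
  (forall z, 0 < w z)%R -> (forall z, 0 <= a z)%R -> (forall z, 0 <= b z)%R ->
  (0 <= K)%R -> (0 < b t)%R ->
  \esum_(z in [set: T]) (w z * a z)%:E <= M%:E ->
  N%:E <= \esum_(z in [set: T]) (w z * b z)%:E ->
  (2 * M <= K * N)%R ->
  exists z, (0 < b z /\ a z <= K * b z)%R.
Proof.
move=> w0 a0 b0 K0 bt0 sum_a sum_b MN.
have wab_ge0 (c : T -> R) : (forall z, 0 <= c z)%R -> forall z, 0 <= (w z * c z)%:E.
  by move=> c0 z; rewrite lee_fin; exact: mulr_ge0 (ltW (w0 z)) (c0 z).
have [M0|M0] := @lerP R M 0.
  exists t; split => //.
  have : (w t * a t <= 0)%R.
    rewrite -lee_fin (le_trans (le_term_esum t (wab_ge0 _ a0))) //.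
    by rewrite (le_trans sum_a) // lee_fin.
  rewrite pmulr_rle0 // => at0; apply: le_trans at0 _.
  by rewrite mulr_ge0 // ltW.
have lt_sums : \esum_(z in [set: T]) (w z * a z)%:E <
               \esum_(z in [set: T]) (K * (w z * b z))%:E.
  under [X in _ < X]eq_esum do rewrite EFinM.
  rewrite ge0_esumZl //; last exact: wab_ge0.
  apply: (le_lt_trans sum_a); apply: (lt_le_trans _ (lee_wpmul2l _ sum_b)).
    by rewrite -EFinM lte_fin; lra.
  by rewrite lee_fin.
have [z _] := esum_lt_exists lt_sums.
rewrite lte_fin mulrCA ltr_pM2l // => abz.
exists z; split; last exact: ltW.
have := le_lt_trans (a0 z) abz; have := b0 z; nra.
Qed.

End ExtendedSums.

Section LpSums.
Variables (R : realType) (p : R).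
Hypothesis p_gt0 : 0 < p.
Local Open Scope ereal_scope.

Let p_ge0 : (0 <= p)%R. Proof. exact: ltW. Qed.
Let p_neq0 : p != 0%R. Proof. by rewrite gt_eqF. Qed.

Lemma lp_pow_ge0 (T : choiceType) (u : T -> R[i]) : 0 <= lp_pow p u.
Proof. by apply: esum_ge0 => x _; rewrite lee_fin powR_ge0. Qed.

Lemma le_lp_pow (T : choiceType) (u v : T -> R[i]) :
  (forall x, cabs (u x) <= cabs (v x))%R -> lp_pow p u <= lp_pow p v.
Proof.
move=> uv; apply: le_esum => x _; rewrite lee_fin.
by apply: (ler_powRr p_ge0) (uv x); exact: cabs_ge0.
Qed.

Lemma lp_pow_fine (T : choiceType) (u : T -> R[i]) :
  in_lp p u -> lp_pow p u = (fine (lp_pow p u))%:E.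
Proof. by move=> u_lp; rewrite fineK // ge0_fin_numE ?lp_pow_ge0. Qed.

Lemma lp_norm_ge0 (T : choiceType) (u : T -> R[i]) : (0 <= lp_norm p u)%R.
Proof. exact: powR_ge0. Qed.

Lemma lp_normK (T : choiceType) (u : T -> R[i]) :
  ((lp_norm p u) `^ p = fine (lp_pow p u))%R.
Proof. by rewrite /lp_norm -powRrM mulVf // powRr1 // fine_ge0 ?lp_pow_ge0. Qed.

Lemma lp_pow0 (T : choiceType) : lp_pow p (fun _ : T => 0%R : R[i]) = 0.
Proof. by apply: esum1 => x _; rewrite cabs0 powR0. Qed.

Lemma lp_pow_cabs (T : choiceType) (u : T -> R[i]) :
  lp_pow p (fun x => (cabs (u x))%:C%C) = lp_pow p u.
Proof. by apply: eq_esum => x _; rewrite cabs_real ger0_norm ?cabs_ge0. Qed.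

Lemma lp_pow_gt0 (T : choiceType) (u : T -> R[i]) :
  in_lp p u -> u <> (fun _ => 0%R) -> (0 < fine (lp_pow p u))%R.
Proof.
move=> u_lp u_neq0.
have [x ux] : exists x, u x <> 0%R.
  apply: contra_notP u_neq0 => no_x; apply/funext => x.
  by apply: contra_notP no_x => ux; exists x.
have ux_gt0 : (0 < cabs (u x) `^ p)%R.
  rewrite powR_gt0 // lt_neqAle cabs_ge0 andbT eq_sym.
  by apply/eqP => /cabs_eq0.
rewrite -lte_fin -lp_pow_fine //; apply: lt_le_trans (le_term_esum x _).
  by rewrite lte_fin.
by move=> i; rewrite lee_fin powR_ge0.
Qed.

Lemma lp_norm_div_powR (T T' : choiceType) (u : T -> R[i]) (v : T' -> R[i]) :
  (0 < fine (lp_pow p v))%R ->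
  ((lp_norm p u / lp_norm p v) `^ p * fine (lp_pow p v) = fine (lp_pow p u))%R.
Proof.
move=> v_gt0.
rewrite powRM ?invr_ge0 ?lp_norm_ge0 // powRV ?lp_norm_ge0 // !lp_normK.
by rewrite -mulrA mulVf ?mulr1 // gt_eqF.
Qed.

Lemma lp_norm_div_le (T T' : choiceType) (u : T -> R[i]) (v : T' -> R[i]) (c : R) :
  (0 <= c)%R -> (0 < fine (lp_pow p v))%R ->
  (fine (lp_pow p u) <= c `^ p * fine (lp_pow p v))%R ->
  (lp_norm p u / lp_norm p v <= c)%R.
Proof.
move=> c0 v_gt0 uv.
have rootK x : (0 <= x)%R -> (x `^ p `^ p^-1 = x)%R.
  by move=> x0; rewrite -powRrM mulfV // powRr1.
rewrite -(rootK _ c0) -[leLHS]rootK ?divr_ge0 ?lp_norm_ge0 //.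
apply: ler_powRr; rewrite ?invr_ge0 ?powR_ge0 //.
by rewrite -(ler_pM2r v_gt0) lp_norm_div_powR.
Qed.

End LpSums.

Section Localization.
Variables (R : realType) (X : choiceType) (d : X -> X -> R) (D : R).
Hypotheses (d_metric : is_metric d) (d_fin : locally_finite d)
  (d_doubling : doubling d D).
Local Open Scope classical_set_scope.

Lemma d_ge0 x y : 0 <= d x y. Proof. exact: d_metric.1. Qed.
Lemma d_sym x y : d x y = d y x. Proof. exact: d_metric.2.2.1. Qed.
Lemma d_triangle x y z : d x z <= d x y + d y z. Proof. exact: d_metric.2.2.2. Qed.
Lemma d_xx x : d x x = 0. Proof. exact/(d_metric.2.1 x x). Qed.

Lemma mem_fset_ball c rho x : (x \in fset_set (cball d c rho)) = (d c x <= rho).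
Proof.
by rewrite in_fset_set ?d_fin //; apply/idP/idP => [/set_mem //|]; exact: mem_set.
Qed.

Lemma V_subset x rho y sigma : cball d x rho `<=` cball d y sigma ->
  (V d x rho <= V d y sigma)%N.
Proof. by move=> sub; apply: fsubset_leq_card; rewrite -fset_set_sub ?d_fin. Qed.

Lemma V_gt0 x rho : 0 <= rho -> (0 < V d x rho)%N.
Proof.
by move=> rho0; rewrite /V cardfs_gt0; apply/fset0Pn; exists x; rewrite mem_fset_ball d_xx.
Qed.

Lemma doubling_const_ge1 (x : X) : 1 <= D.
Proof.
have V12 : (V d x 1 <= V d x (2 * 1))%N.
  by apply: V_subset => y; rewrite /cball /= mulr1 => /le_trans; apply; rewrite ler1n.
have V1_gt0 : (0 < (V d x 1)%:R :> R) by rewrite ltr0n V_gt0.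
rewrite -(ler_pM2r V1_gt0) mul1r; apply: le_trans (d_doubling x ltr01).
by rewrite ler_nat.
Qed.

Lemma V_quadruple x rho : 0 < rho ->
  (V d x (4 * rho))%:R <= D ^+ 2 * (V d x rho)%:R.
Proof.
move=> rho_gt0; have -> : 4 * rho = 2 * (2 * rho) by ring.
apply: le_trans (d_doubling x _) _; first by rewrite mulr_gt0.
rewrite expr2 -mulrA ler_wpM2l ?d_doubling //.
exact: le_trans (doubling_const_ge1 x).
Qed.

Variable L : R.
Hypothesis L_gt0 : 0 < L.

Definition ball_weight (z : X) : R := ((V d z L)%:R)^-1.

Lemma ball_weight_gt0 z : 0 < ball_weight z.
Proof. by rewrite /ball_weight invr_gt0 ltr0n V_gt0 // ltW. Qed.

(* Every [z] in [B(c, 2L)] has [B(c, 2L) \subset B(z, 4L)], so [V(z, L)] is at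
   least [V(c, 2L) / D^2]. *)
Lemma sum_ball_weight_le c :
  \sum_(z <- fset_set (cball d c (2 * L))) ball_weight z <= D ^+ 2.
Proof.
set B := fset_set _; set n := V d c (2 * L).
have n_gt0 : (0 < n)%N by rewrite V_gt0 // mulr_ge0 // ltW.
have D_gt0 : 0 < D := lt_le_trans ltr01 (doubling_const_ge1 c).
have weight_le z : z \in B -> ball_weight z <= D ^+ 2 / n%:R.
  rewrite /B mem_fset_ball => cz.
  have n_le : (n <= V d z (4 * L))%N.
    apply: V_subset => y; rewrite /cball /= => cy.
    by have := d_triangle z c y; rewrite d_sym in cz; lra.
  have Vz_gt0 : (0 < V d z L)%N by rewrite V_gt0 // ltW.
  rewrite /ball_weight -invf_div lef_pV2 ?posrE ?divr_gt0 ?exprn_gt0 ?ltr0n //.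
  rewrite ler_pdivrMr ?exprn_gt0 // mulrC; apply: le_trans (V_quadruple z L_gt0).
  by rewrite ler_nat.
apply: le_trans (_ : \sum_(z <- B) (D ^+ 2 / n%:R) <= _).
  by rewrite !big_seq; apply: ler_sum.
rewrite big_const_seq count_predT iter_addr_0 -(mulr_natr (D ^+ 2 / _)) -mulrA.
by rewrite [size B]/(n : nat) mulVf ?mulr1 // pnatr_eq0 -lt0n.
Qed.

(* Every [z] in [B(x, L/2)] has [B(z, L) \subset B(x, 4 (L/2))]. *)
Lemma sum_ball_weight_ge x :
  (D ^+ 2)^-1 <= \sum_(z <- fset_set (cball d x (L / 2))) ball_weight z.
Proof.
set B := fset_set _; set n := V d x (L / 2).
have L2_gt0 : 0 < L / 2 by rewrite divr_gt0.
have n_gt0 : (0 < n)%N by rewrite V_gt0 // ltW.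
have D_gt0 : 0 < D := lt_le_trans ltr01 (doubling_const_ge1 x).
have weight_ge z : z \in B -> (D ^+ 2 * n%:R)^-1 <= ball_weight z.
  rewrite /B mem_fset_ball => xz.
  have V_le : (V d z L <= V d x (4 * (L / 2)))%N.
    apply: V_subset => y; rewrite /cball /= => zy.
    by have := d_triangle x z y; lra.
  rewrite /ball_weight lef_pV2 ?posrE ?mulr_gt0 ?ltr0n ?V_gt0 ?(ltW L_gt0) ?(ltW L2_gt0) //.
  by apply: le_trans (V_quadruple x L2_gt0); rewrite ler_nat.
apply: (@le_trans _ _ (\sum_(z <- B) (D ^+ 2 * n%:R)^-1)); last first.
  by rewrite !big_seq; apply: ler_sum.
rewrite big_const_seq count_predT iter_addr_0 -(mulr_natr (_^-1)) (invfM (D ^+ 2)) -mulrA.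
by rewrite [size B]/(n : nat) mulVf ?mulr1 // pnatr_eq0 -lt0n.
Qed.

Lemma esum_ball_weight c rho k : 0 <= k ->
  (\esum_(z in [set: X]) (((if d c z <= rho then ball_weight z else 0) * k)%:E) =
  ((\sum_(z <- fset_set (cball d c rho)) ball_weight z) * k)%:E)%E.
Proof.
move=> k0; rewrite (@esum_finite_support _ _ (cball d c rho)) ?d_fin //.
- rewrite sumEFin mulr_suml; congr (_%:E).
  by rewrite big_seq [RHS]big_seq; apply: eq_bigr => z; rewrite mem_fset_ball => ->.
- move=> z; rewrite lee_fin; case: ifP => _; rewrite ?mul0r //.
  by rewrite mulr_ge0 // ltW ?ball_weight_gt0.
- by move=> z cz; case: ifPn => [/cz|_] //; rewrite mul0r.
Qed.

Definition cutoff (z x : X) : R := Num.max 0 (1 - d z x / L).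

Lemma cutoff_ge0 z x : 0 <= cutoff z x.
Proof. by rewrite /cutoff le_max lexx. Qed.

Lemma cutoff_le1 z x : cutoff z x <= 1.
Proof.
rewrite /cutoff ge_max ler01 /=.
by have := divr_ge0 (d_ge0 z x) (ltW L_gt0); lra.
Qed.

Lemma cutoff_id z : cutoff z z = 1.
Proof. by rewrite /cutoff d_xx mul0r subr0 max_r // ler01. Qed.

Lemma cutoff_far z x : L <= d z x -> cutoff z x = 0.
Proof. by move=> Lzx; rewrite /cutoff max_l // subr_le0 ler_pdivlMr // mul1r. Qed.

Lemma cutoff_near z x : d z x <= L / 2 -> 2^-1 <= cutoff z x.
Proof.
move=> zx; rewrite /cutoff le_max; apply/orP; right.
have : d z x / L <= 2^-1 by rewrite ler_pdivrMr // mulrC.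
lra.
Qed.

Lemma cutoff_lipschitz z x x' : `|cutoff z x - cutoff z x'| <= d x x' / L.
Proof.
apply: le_trans (ler_dist_max0 _ _) _.
have -> : (1 - d z x / L) - (1 - d z x' / L) = (d z x' - d z x) / L by ring.
rewrite normrM (@ger0_norm _ L^-1) ?invr_ge0 ?(ltW L_gt0) //.
rewrite ler_pM2r ?invr_gt0 // ler_norml.
have := d_triangle z x x'; have := d_triangle z x' x; rewrite (d_sym x' x).
by move=> *; apply/andP; split; lra.
Qed.

Variable f : X -> R[i].

Definition cutoff_fun (z : X) : X -> R[i] := fun x => (cutoff z x)%:C%C * f x.

Lemma cabs_cutoff_fun z x : cabs (cutoff_fun z x) = cutoff z x * cabs (f x).
Proof. by rewrite /cutoff_fun cabsM cabs_real ger0_norm ?cutoff_ge0. Qed.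

Lemma cabs_cutoff_fun_le z x : cabs (cutoff_fun z x) <= cabs (f x).
Proof.
rewrite cabs_cutoff_fun; have := cutoff_le1 z x; have := cutoff_ge0 z x.
have := cabs_ge0 (f x); nra.
Qed.

Lemma cutoff_fun_support z : supported_in_ball d 0 (cutoff_fun z) (2 * L).
Proof.
exists z => x; apply: contra_notP => /negP; rewrite -ltNge => Lzx.
rewrite /cutoff_fun cutoff_far ?mul0r //.
by apply: le_trans (ltW Lzx); rewrite ler_peMl ?ler1n ?ltW.
Qed.

Variables (Y : choiceType) (a : Y -> X -> R[i]) (r : R).
Hypotheses (a_thin : thin d a r) (r_ge0 : 0 <= r) (r_le_L : r <= L).

Definition row_center (y : Y) : X := projT1 (cid (a_thin y)).

Lemma row_centerP y x : a y x <> 0 -> d (row_center y) x <= r.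
Proof. exact: (projT2 (cid (a_thin y))). Qed.

Definition row_ball (y : Y) : {fset X} := fset_set (cball d (row_center y) r).

Lemma apply_op_row_ball (b : Y -> X -> R[i]) (u : X -> R[i]) y :
  (forall x, a y x = 0 -> b y x = 0) ->
  apply_op b u y = \sum_(x <- row_ball y) b y x * u x.
Proof.
move=> ab; rewrite /apply_op (fsbigTE (row_ball y)) // => x.
rewrite mem_fset_ball => yx; rewrite ab ?mul0r //.
by apply: contra_notP (negP yx); exact: row_centerP.
Qed.

Definition absA_absf : Y -> R[i] :=
  apply_op (abs_op a) (fun x => (cabs (f x))%:C%C).

Lemma cabs_absA_absf y :
  cabs (absA_absf y) = \sum_(x <- row_ball y) cabs (a y x) * cabs (f x).
Proof.
rewrite /absA_absf apply_op_row_ball => [|x ayx]; last first.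
  by rewrite /abs_op ayx cabs0.
have -> : \sum_(x <- row_ball y) abs_op a y x * (cabs (f x))%:C%C =
          (\sum_(x <- row_ball y) cabs (a y x) * cabs (f x))%:C%C.
  by rewrite rmorph_sum; apply: eq_bigr => x _; rewrite rmorphM.
rewrite cabs_real ger0_norm //.
by apply: sumr_ge0 => x _; rewrite mulr_ge0 ?cabs_ge0.
Qed.

Lemma cabs_apply_op_le (u : X -> R[i]) y :
  (forall x, cabs (u x) <= cabs (f x)) -> cabs (apply_op a u y) <= cabs (absA_absf y).
Proof.
move=> uf; rewrite cabs_absA_absf apply_op_row_ball //.
apply: le_trans (ler_cabs_sum _ _) _; apply: ler_sum => x _.
by rewrite cabsM ler_wpM2l ?cabs_ge0.
Qed.

(* Split [cutoff z x] as [cutoff z c + (cutoff z x - cutoff z c)] with [c] the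
   row center: on the row ball the second term is at most [r / L]. *)
Lemma cabs_apply_cutoff_le z y :
  cabs (apply_op a (cutoff_fun z) y) <=
  cutoff z (row_center y) * cabs (apply_op a f y) + r / L * cabs (absA_absf y).
Proof.
rewrite cabs_absA_absf !apply_op_row_ball //; set c := row_center y.
have -> : \sum_(x <- row_ball y) a y x * cutoff_fun z x =
    (cutoff z c)%:C%C * (\sum_(x <- row_ball y) a y x * f x) +
    \sum_(x <- row_ball y) a y x * ((cutoff z x - cutoff z c)%:C%C * f x).
  rewrite mulr_sumr -big_split /=; apply: eq_bigr => x _.
  by rewrite /cutoff_fun rmorphB /=; ring.
apply: le_trans (ler_cabsD _ _) _.
rewrite cabsM cabs_real ger0_norm ?cutoff_ge0 // lerD //.
apply: le_trans (ler_cabs_sum _ _) _; rewrite mulr_sumr !big_seq.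
apply: ler_sum => x; rewrite mem_fset_ball => cx.
rewrite !cabsM cabs_real mulrCA ler_wpM2r ?mulr_ge0 ?cabs_ge0 //.
apply: le_trans (cutoff_lipschitz z x c) _.
by rewrite d_sym ler_pM2r ?invr_gt0.
Qed.

Lemma apply_cutoff_far z y : 2 * L < d z (row_center y) ->
  apply_op a (cutoff_fun z) y = 0.
Proof.
move=> far; rewrite apply_op_row_ball //; apply: big1_seq => x /andP[_].
rewrite mem_fset_ball => cx; rewrite /cutoff_fun cutoff_far ?mul0r ?mulr0 //.
have := d_triangle z x (row_center y); rewrite (d_sym x).
by have := r_le_L; lra.
Qed.

Variable p : R.
Hypotheses (p_ge1 : 1 <= p) (a_bounded : op_norm_le1 p (abs_op a))
  (f_lp : in_lp p f).

Let p_gt0 : 0 < p. Proof. exact: lt_le_trans ltr01 p_ge1. Qed.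
Let p_ge0 : 0 <= p. Proof. exact: ltW. Qed.

Lemma absA_absf_lp : in_lp p absA_absf /\ fine (lp_pow p absA_absf) <= fine (lp_pow p f).
Proof.
have absf_lp : in_lp p (fun x => (cabs (f x))%:C%C) by rewrite /in_lp lp_pow_cabs.
have [Af_lp Af_le] := a_bounded absf_lp; split => //.
rewrite -(lp_pow_cabs p f) -!(lp_normK p_gt0).
by apply: (ler_powRr p_ge0) Af_le; exact: lp_norm_ge0.
Qed.

Lemma in_lp_apply_op (u : X -> R[i]) :
  (forall x, cabs (u x) <= cabs (f x)) -> in_lp p (apply_op a u).
Proof.
move=> uf; apply: le_lt_trans absA_absf_lp.1.
by apply: le_lp_pow => // y; exact: cabs_apply_op_le.
Qed.

Lemma in_lp_cutoff_fun z : in_lp p (cutoff_fun z).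
Proof. by apply: le_lt_trans f_lp; apply: le_lp_pow => // x; exact: cabs_cutoff_fun_le. Qed.

Lemma powR_cabs_apply_cutoff_le z y :
  cabs (apply_op a (cutoff_fun z) y) `^ p <=
  if d (row_center y) z <= 2 * L then
    (cabs (apply_op a f y) + r / L * cabs (absA_absf y)) `^ p
  else 0.
Proof.
case: ifPn => [_|far].
  apply: (ler_powRr p_ge0); first exact: cabs_ge0.
  apply: le_trans (cabs_apply_cutoff_le z y) _.
  have := cutoff_le1 z (row_center y); have := cutoff_ge0 z (row_center y).
  by have := cabs_ge0 (apply_op a f y); rewrite lerD2r; nra.
by rewrite apply_cutoff_far ?cabs0 ?powR0 ?gt_eqF // d_sym ltNge.
Qed.

Local Open Scope ereal_scope.

Lemma esum_weighted_lp_pow (T : choiceType) (u : X -> T -> R[i]) :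
  (forall z, in_lp p (u z)) ->
  \esum_(z in [set: X]) (ball_weight z * fine (lp_pow p (u z)))%:E =
  \esum_(t in [set: T]) \esum_(z in [set: X]) (ball_weight z * cabs (u z t) `^ p)%:E.
Proof.
move=> u_lp; rewrite -exchange_esum => [|z t]; last first.
  by rewrite lee_fin mulr_ge0 ?powR_ge0 // ltW ?ball_weight_gt0.
apply: eq_esum => z _; rewrite EFinM -lp_pow_fine //.
rewrite /lp_pow -ge0_esumZl ?ltW ?ball_weight_gt0 // => t.
by rewrite lee_fin powR_ge0.
Qed.

(* The rows [y] with [A (cutoff_fun z) y != 0] have [z] in [B(row_center y, 2L)],
   whose total weight is at most [D^2]. *)
Lemma row_weighted_sum_le y :
  \esum_(z in [set: X]) (ball_weight z * cabs (apply_op a (cutoff_fun z) y) `^ p)%:E <=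
  (D ^+ 2 * 2 `^ p * (cabs (apply_op a f y) `^ p +
                      (r / L) `^ p * cabs (absA_absf y) `^ p))%:E.
Proof.
have w_ge0 z : (0 <= ball_weight z)%R by exact/ltW/ball_weight_gt0.
set U := (cabs (apply_op a f y) + r / L * cabs (absA_absf y))%R.
apply: (@le_trans _ _ (\esum_(z in [set: X])
    (((if d (row_center y) z <= 2 * L then ball_weight z else 0) * U `^ p)%:E))).
  apply: le_esum => z _; rewrite lee_fin.
  have := powR_cabs_apply_cutoff_le z y; case: ifP => _ Ah; first by rewrite ler_wpM2l.
  by rewrite mul0r -(mulr0 (ball_weight z)) ler_wpM2l.
rewrite esum_ball_weight ?powR_ge0 // lee_fin.
apply: le_trans (ler_wpM2r (powR_ge0 _ _) (sum_ball_weight_le _)) _.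
have rL_ge0 : (0 <= r / L)%R by rewrite divr_ge0 // ltW.
rewrite -mulrA ler_wpM2l ?sqr_ge0 // -powRM ?cabs_ge0 //.
rewrite /U; apply: (powRD_le p_ge0); first exact: cabs_ge0.
exact: mulr_ge0 rL_ge0 (cabs_ge0 _).
Qed.

(* Every [z] in [B(x, L/2)] has [cutoff z x >= 1/2], and that ball has total
   weight at least [1 / D^2]. *)
Lemma col_weighted_sum_ge x :
  ((2 `^ p)^-1 / D ^+ 2 * cabs (f x) `^ p)%:E <=
  \esum_(z in [set: X]) (ball_weight z * cabs (cutoff_fun z x) `^ p)%:E.
Proof.
have w_ge0 z : (0 <= ball_weight z)%R by exact/ltW/ball_weight_gt0.
have fx_ge0 : (0 <= (2 `^ p)^-1 * cabs (f x) `^ p)%R.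
  by rewrite mulr_ge0 ?invr_ge0 ?powR_ge0.
apply: (@le_trans _ _ (\esum_(z in [set: X])
    (((if d x z <= L / 2 then ball_weight z else 0) *
      ((2 `^ p)^-1 * cabs (f x) `^ p))%:E))); last first.
  apply: le_esum => z _; rewrite lee_fin; case: ifPn => xz.
    rewrite ler_wpM2l // cabs_cutoff_fun powRM ?cutoff_ge0 ?cabs_ge0 //.
    rewrite ler_wpM2r ?powR_ge0 // -powRV // ler_powRr ?invr_ge0 //.
    by rewrite cutoff_near // d_sym.
  by rewrite mul0r mulr_ge0 ?powR_ge0.
rewrite esum_ball_weight // lee_fin mulrAC mulrC ler_wpM2r //.
exact: sum_ball_weight_ge.
Qed.

Lemma weighted_lp_pow_apply_cutoff_le :
  \esum_(z in [set: X]) (ball_weight z * fine (lp_pow p (apply_op a (cutoff_fun z))))%:E <=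
  (D ^+ 2 * 2 `^ p * (fine (lp_pow p (apply_op a f)) + (r / L) `^ p * fine (lp_pow p f)))%:E.
Proof.
rewrite esum_weighted_lp_pow => [|z]; last exact/in_lp_apply_op/cabs_cutoff_fun_le.
apply: le_trans (le_esum (fun y _ => row_weighted_sum_le y)) _.
have c_ge0 : (0 <= D ^+ 2 * 2 `^ p)%R by rewrite mulr_ge0 ?sqr_ge0 ?powR_ge0.
have Af_lp : in_lp p (apply_op a f) by apply: in_lp_apply_op => x.
under eq_esum do rewrite (EFinM (D ^+ 2 * 2 `^ p)) EFinD (EFinM ((r / L) `^ p)).
rewrite ge0_esumZl // => [|y]; last by rewrite adde_ge0 ?mule_ge0 ?lee_fin ?powR_ge0.
rewrite esumD => [|y _|y _]; rewrite ?mule_ge0 ?lee_fin ?powR_ge0 //.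
rewrite ge0_esumZl ?powR_ge0 // => [|y]; last by rewrite lee_fin powR_ge0.
rewrite (EFinM (D ^+ 2 * 2 `^ p)) lee_wpmul2l ?lee_fin //.
rewrite -/(lp_pow p (apply_op a f)) -/(lp_pow p absA_absf) EFinD EFinM.
rewrite (lp_pow_fine Af_lp) (lp_pow_fine absA_absf_lp.1) leeD2l // lee_wpmul2l ?lee_fin ?powR_ge0 //.
exact: absA_absf_lp.2.
Qed.

Lemma weighted_lp_pow_cutoff_ge :
  (((2 `^ p)^-1 / D ^+ 2) * fine (lp_pow p f))%:E <=
  \esum_(z in [set: X]) (ball_weight z * fine (lp_pow p (cutoff_fun z)))%:E.
Proof.
rewrite esum_weighted_lp_pow; last exact: in_lp_cutoff_fun.
apply: le_trans (le_esum (fun x _ => col_weighted_sum_ge x)).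
under eq_esum do rewrite EFinM.
rewrite ge0_esumZl; first by rewrite -/(lp_pow p f) (lp_pow_fine f_lp) -EFinM.
  by rewrite divr_ge0 ?invr_ge0 ?powR_ge0 ?sqr_ge0.
by move=> x; rewrite lee_fin powR_ge0.
Qed.

Hypothesis f_neq0 : f <> (fun _ => 0%R).

Lemma exists_good_cutoff : exists z, cutoff_fun z <> (fun _ => 0%R) /\
  (lp_norm p (apply_op a (cutoff_fun z)) / lp_norm p (cutoff_fun z) <=
   16 * D ^+ 4 * (lp_norm p (apply_op a f) / lp_norm p f + r / L))%R.
Proof.
have [x0 fx0] : exists x, f x <> 0%R.
  apply: contra_notP f_neq0 => no_x; apply/funext => x.
  by apply: contra_notP no_x => fx; exists x.
have D_ge1 := doubling_const_ge1 x0.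
have PF_gt0 := lp_pow_gt0 f_lp f_neq0.
pose rho := (lp_norm p (apply_op a f) / lp_norm p f)%R.
have rho_ge0 : (0 <= rho)%R by rewrite divr_ge0 ?lp_norm_ge0.
have rL_ge0 : (0 <= r / L)%R by rewrite divr_ge0 // ltW.
pose c := (16 * D ^+ 4 * (rho + r / L))%R.
have D_ge0 : (0 <= D)%R := le_trans ler01 D_ge1.
have c_ge0 : (0 <= c)%R.
  exact: mulr_ge0 (mulr_ge0 (ler0n _ 16) (exprn_ge0 4 D_ge0)) (addr_ge0 rho_ge0 rL_ge0).
have averages_le :
    (2 * (D ^+ 2 * 2 `^ p * (fine (lp_pow p (apply_op a f)) +
                             (r / L) `^ p * fine (lp_pow p f))) <=
     c `^ p * ((2 `^ p)^-1 / D ^+ 2 * fine (lp_pow p f)))%R.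
  rewrite -(lp_norm_div_powR p_gt0 (apply_op a f) PF_gt0) -/rho.
  exact: localization_constant D_ge1 p_ge1 rho_ge0 rL_ge0 (ltW PF_gt0).
have x0_gt0 : (0 < fine (lp_pow p (cutoff_fun x0)))%R.
  apply: lp_pow_gt0 (in_lp_cutoff_fun x0) _ => /(congr1 (fun g => g x0)).
  by rewrite /cutoff_fun cutoff_id mul1r.
have [z [hz_gt0 hz_le]] := weighted_pigeonhole ball_weight_gt0
  (fun z => fine_ge0 (lp_pow_ge0 p (apply_op a (cutoff_fun z))))
  (fun z => fine_ge0 (lp_pow_ge0 p (cutoff_fun z)))
  (powR_ge0 c p) x0_gt0 weighted_lp_pow_apply_cutoff_le
  weighted_lp_pow_cutoff_ge averages_le.
exists z; split; last exact: lp_norm_div_le.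
by move=> hz0; move: hz_gt0; rewrite hz0 lp_pow0 // ltxx.
Qed.

End Localization.

Theorem theorem4p1 (R : realType) (D : R) :
  exists C : R,
  forall (X Y : choiceType) (d : X -> X -> R) (a : Y -> X -> R[i]) (r p : R),
    is_metric d -> locally_finite d -> doubling d D ->
    thin d a r -> 0 <= r ->
    1 <= p -> op_norm_le1 p (abs_op a) ->
    forall (f : X -> R[i]) (L : R),
      in_lp p f -> f <> (fun _ => 0) -> 0 < L -> r <= L ->
      exists h : X -> R[i],
        [/\ in_lp p h, h <> (fun _ => 0), supported_in_ball d 0 h (2 * L) &
          lp_norm p (apply_op a h) / lp_norm p h
            <= C * (lp_norm p (apply_op a f) / lp_norm p f + r / L)].
Proof.
exists (16 * D ^+ 4).
move=> X Y d a r p d_metric d_fin d_doubling a_thin r_ge0 p_ge1 a_bounded.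
move=> f L f_lp f_neq0 L_gt0 r_le_L.
have [z [hz_neq0 hz_le]] := exists_good_cutoff d_metric d_fin d_doubling L_gt0
  a_thin r_ge0 r_le_L p_ge1 a_bounded f_lp f_neq0.
exists (cutoff_fun d L f z); split => //.
- by apply: in_lp_cutoff_fun.
- by apply: cutoff_fun_support.
Qed.
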